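(* Let $A$ and $B$ be rings, $f: A\to B$ a ring homomorphism and $J$ a proper ideal of $B$. Then: (1) If $A\bowtie^{f}J$ is a nil-Armendariz ring, then $A$ is a nil-Armendariz ring. (2) If $A$ and $f(A)+J$ are nil-Armendariz rings, then $A\bowtie^{f}J$ is a nil-Armendariz ring.
   Context: All rings are associative with identity (not necessarily commutative), ring homomorphisms are unital, and ideals are two-sided. $\mathrm{nil}(R)$ denotes the set of nilpotent elements of a ring $R$, and $\mathrm{nil}(R)[x]$ the set of polynomials all of whose coefficients lie in $\mathrm{nil}(R)$. For a ring homomorphism $f:A\to B$ and an ideal $J$ of $B$, the amalgamation is the subring $A\bowtie^{f}J=\{(a,f(a)+j)\mid a\in A,\ j\in J\}$ of $A\times B$; $f(A)+J=\{f(a)+j: a\in A, j\in J\}$ is a subring of $B$. A ring $R$ is nil-Armendariz if whenever $p(x)=\sum_{i=0}^n a_ix^i$ and $q(x)=\sum_{j=0}^m b_jx^j$ in $R[x]$ satisfy $p(x)q(x)\in\mathrm{nil}(R)[x]$, then $a_ib_j\in\mathrm{nil}(R)$ for all $i,j$. *)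

From HB Require Import structures.
From mathcomp Require Import all_boot all_order all_algebra.
Set Implicit Arguments. Unset Strict Implicit. Unset Printing Implicit Defensive.
Import GRing.Theory.
Local Open Scope ring_scope.

Definition nilp (R : nzRingType) (x : R) : Prop := exists n : nat, x ^+ n = 0.

(* Polynomials over the subring S are polynomials of {poly R} whose
   coefficients lie in S; ring operations (hence products and nilpotency)
   in S are those of R. *)
Definition nilArmendariz_on (R : nzRingType) (S : R -> Prop) : Prop :=
  forall p q : {poly R},
    (forall i, S p`_i) -> (forall i, S q`_i) ->
    (forall k, nilp (p * q)`_k) ->
    forall i j, nilp (p`_i * q`_j).

Definition nilArmendariz (R : nzRingType) : Prop :=
  nilArmendariz_on (fun _ : R => True).

Definition proper_two_sided_ideal (B : nzRingType) (J : {pred B}) : Prop :=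
  [/\ 0 \in J, 1 \notin J,
      (forall u v, u \in J -> v \in J -> u + v \in J) /\
      (forall u, u \in J -> - u \in J),
      (forall a u, u \in J -> a * u \in J) &
      (forall a u, u \in J -> u * a \in J)].

Definition amalg (A B : nzRingType) (f : A -> B) (J : {pred B}) (x : A * B) : Prop :=
  exists a : A, exists j : B, j \in J /\ x = (a, f a + j).

Definition fAJ (A B : nzRingType) (f : A -> B) (J : {pred B}) (b : B) : Prop :=
  exists a : A, exists j : B, j \in J /\ b = f a + j.

From Pilot Require Import Defs.
From HB Require Import structures.
From mathcomp Require Import all_boot all_order all_algebra.
Set Implicit Arguments. Unset Strict Implicit. Unset Printing Implicit Defensive.
Local Open Scope ring_scope.
Import GRing.Theory.

(* Both parts follow from the coefficientwise behaviour of ring morphisms on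
   polynomials.  For (1), A embeds in A ⋈^f J by a ↦ (a, f a), and the first
   projection is a left inverse of this embedding, so nilpotency can be pulled
   back along it.  For (2), a product of coefficients in A ⋈^f J is nilpotent
   as soon as both of its components are, and the two components are
   controlled by the nil-Armendariz property of A and of f(A) + J, via the two
   projections. *)

(* [Defs.nilp] is qualified because [seq.nilp] shadows it. *)
Lemma nilp_rmorph (R S : nzRingType) (g : {rmorphism R -> S}) (x : R) :
  Defs.nilp x -> Defs.nilp (g x).
Proof. by move=> [n xn]; exists n; rewrite -rmorphXn xn rmorph0. Qed.

Lemma expr_pair (R S : nzRingType) (x : R) (y : S) (n : nat) :
  (x, y) ^+ n = (x ^+ n, y ^+ n).
Proof. by elim: n => [|n IHn]; rewrite ?expr0 // !exprS IHn. Qed.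

Lemma nilp_pair (R S : nzRingType) (x : R * S) :
  Defs.nilp x.1 -> Defs.nilp x.2 -> Defs.nilp x.
Proof.
case: x => x y [n xn] [m ym]; exists (n + m)%N.
by rewrite expr_pair !exprD xn ym mul0r mulr0.
Qed.

Lemma nilArmendariz_on_rmorph (R R' : nzRingType) (g : {rmorphism R -> R'})
    (S : R -> Prop) (S' : R' -> Prop) :
  (forall x, S x -> S' (g x)) -> nilArmendariz_on S' ->
  forall p q : {poly R}, (forall i, S p`_i) -> (forall i, S q`_i) ->
    (forall k, Defs.nilp (p * q)`_k) -> forall i j, Defs.nilp (g (p`_i * q`_j)).
Proof.
move=> gS nilS' p q Sp Sq npq i j; rewrite rmorphM.
have := nilS' (map_poly g p) (map_poly g q) _ _ _ i j; rewrite !coef_map; apply.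
- by move=> k; rewrite coef_map; apply: gS.
- by move=> k; rewrite coef_map; apply: gS.
by move=> k; rewrite -rmorphM coef_map; apply: nilp_rmorph.
Qed.

Lemma nilArmendariz_on_retract (R R' : nzRingType) (g : {rmorphism R -> R'})
    (h : {rmorphism R' -> R}) (S : R -> Prop) (S' : R' -> Prop) :
  cancel g h -> (forall x, S x -> S' (g x)) -> nilArmendariz_on S' ->
  nilArmendariz_on S.
Proof.
move=> gK gS nilS' p q Sp Sq npq i j; rewrite -[_ * _]gK.
apply: nilp_rmorph; exact: (nilArmendariz_on_rmorph gS nilS' Sp Sq npq).
Qed.

Lemma nilArmendariz_on_prod (R S : nzRingType) (T : R * S -> Prop)
    (T1 : R -> Prop) (T2 : S -> Prop) :
  (forall x, T x -> T1 x.1) -> (forall x, T x -> T2 x.2) ->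
  nilArmendariz_on T1 -> nilArmendariz_on T2 -> nilArmendariz_on T.
Proof.
move=> TT1 TT2 nilT1 nilT2 p q Tp Tq npq i j; apply: nilp_pair.
- exact: (nilArmendariz_on_rmorph (g := fst) TT1 nilT1).
- exact: (nilArmendariz_on_rmorph (g := snd) TT2 nilT2).
Qed.

Section Graph.
Variables (A B : nzRingType) (f : {rmorphism A -> B}).

Definition graph_map (a : A) : A * B := (a, f a).

Fact graph_map_is_zmod_morphism : zmod_morphism graph_map.
Proof. by move=> x y; rewrite /graph_map rmorphB. Qed.

Fact graph_map_is_monoid_morphism : monoid_morphism graph_map.
Proof. by split=> [|x y]; rewrite /graph_map ?rmorph1 ?rmorphM. Qed.

HB.instance Definition _ :=
  GRing.isZmodMorphism.Build A (A * B)%type graph_map graph_map_is_zmod_morphism.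
HB.instance Definition _ :=
  GRing.isMonoidMorphism.Build A (A * B)%type graph_map
    graph_map_is_monoid_morphism.

Lemma graph_mapK : cancel graph_map fst. Proof. by []. Qed.

End Graph.

Theorem theorem3p1 (A B : nzRingType) (f : {rmorphism A -> B}) (J : {pred B}) :
  proper_two_sided_ideal J ->
  (nilArmendariz_on (@amalg A B f J) -> nilArmendariz A) /\
  (nilArmendariz A -> nilArmendariz_on (@fAJ A B f J) ->
     nilArmendariz_on (@amalg A B f J)).
Proof.
move=> [J0 _ _ _ _]; split=> [nilAJ | nilA nilfAJ].
- apply: (nilArmendariz_on_retract (graph_mapK f) _ nilAJ) => a _.
  by exists a, 0; rewrite addr0.
- apply: (nilArmendariz_on_prod _ _ nilA nilfAJ) => // _ [a [j [Jj ->]]].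
  by exists a, j.
Qed.
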